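(* Let $Y$ be a random variable with values in $S_b$ such that $uYu^*$ has the same distribution as $Y$ for all $u\in\mathbb{O}(d)$, and let $x_0\in S_a$. Then almost surely $x_0+Y\in S_{a+b}$ if $a+b\le d$, and almost surely $x_0+Y\in S_d=\mathcal{P}_d$ if $a+b\ge d$. Furthermore, if $x_0\in S_c$ and $x_0+Y\in S_{a+b}$ almost surely for some integer $a$ with $a+b<d$, then $c=a$.
   Context: $\mathcal{P}_d$ is the cone of real symmetric positive definite $d\times d$ matrices and $\overline{\mathcal{P}_d}$ its closure; for $b=0,\ldots,d$, $S_b=\{x\in\overline{\mathcal{P}_d}:\operatorname{rank}x=b\}$. $\mathbb{O}(d)$ is the orthogonal group and $u^*$ the transpose. *)

From HB Require Import structures.
From mathcomp Require Import all_boot all_order all_algebra.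
From mathcomp Require Import all_classical all_reals all_analysis.
Set Implicit Arguments. Unset Strict Implicit. Unset Printing Implicit Defensive.
Import Order.TTheory GRing.Theory Num.Theory.
Local Open Scope classical_set_scope.
Local Open Scope ring_scope.

(* The carrier 'M[R]_d, pointed at 0 (needed to build the generated
   sigma-algebra). *)
Definition mxR (R : realType) (d : nat) := 'M[R]_d.
HB.instance Definition _ (R : realType) (d : nat) := Choice.on (mxR R d).
HB.instance Definition _ (R : realType) (d : nat) :=
  isPointed.Build (mxR R d) (0 : 'M[R]_d).

(* Generators of the Borel sigma-algebra on d x d real matrices, viewed as
   R^(d*d): preimages of Borel sets of R under the coordinate maps. *)
Definition mx_entry_gen (R : realType) (d : nat) : set (set (mxR R d)) :=
  [set A | exists (i j : 'I_d) (B : set R),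
      measurable B /\ A = (fun M : mxR R d => (M : 'M[R]_d) i j) @^-1` B].

Notation MxMeas R d := (g_sigma_algebraType (@mx_entry_gen R d)).

(* Symmetric positive semidefinite matrices: the closure of the cone P_d. *)
Definition psd (R : realType) (d : nat) (x : 'M[R]_d) : Prop :=
  x^T = x /\ forall v : 'cV[R]_d, 0 <= (v^T *m x *m v) ord0 ord0.

Definition S_rank (R : realType) (d b : nat) : set 'M[R]_d :=
  [set x | psd x /\ \rank x = b].

Definition orthogonal_mx (R : realType) (d : nat) (u : 'M[R]_d) : Prop :=
  u *m u^T = 1%:M.

Arguments S_rank {R} d b.
Arguments orthogonal_mx {R d}.

From HB Require Import structures.
From mathcomp Require Import all_boot all_order all_algebra.
From mathcomp Require Import all_classical all_reals all_analysis.
From mathcomp Require Import ring lra measurable_realfun.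
Import Order.TTheory GRing.Theory Num.Theory.
Set Implicit Arguments. Unset Strict Implicit. Unset Printing Implicit Defensive.
Local Open Scope classical_set_scope.
Local Open Scope ring_scope.

(* Induction on a = rank x0.  Write x0 as the orthogonal sum of a psd x1 of
   rank a - 1 (x0 compressed by the projection onto v^perp) and a line v with
   v x1 = 0; then rank (x0 + Y) = rank (x1 + Y) + [v not in row (x1 + Y)], so
   it suffices that P (v in row (x1 + Y)) = 0 when rank (x1 + Y) < d a.s.
   A Householder reflection fixing x1 carries v to any nonzero c with
   c x1 = 0, so by O(d)-invariance all these events have the same probability
   p.  Take N points c on the moment curve t |-> (1, t, ..., t^(k-1)) B, where
   the rows of B are a basis of ker x1: a nonzero z in ker x1 orthogonal to
   row (x1 + Y w) is orthogonal to fewer than k of them, so every outcome lies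
   in fewer than k of the N events, and N p <= k for all N forces p = 0.
   Ranks are measurable because they are detected by nonvanishing minors. *)

Section RankFacts.
Variable F : fieldType.

Lemma exists_row_neq0 m n (A : 'M[F]_(m, n)) : A != 0 -> exists i, row i A != 0.
Proof.
move=> A0; apply/existsP; apply: contraR A0 => /existsPn rows0.
by apply/eqP/row_matrixP => i; rewrite row0; apply/eqP/negbNE/rows0.
Qed.

Lemma rank_geq_minor m n k (A : 'M[F]_(m, n)) (f : 'I_k -> 'I_m) (g : 'I_k -> 'I_n) :
  \det (mxsub f g A) != 0 -> (k <= \rank A)%N.
Proof.
move=> det_neq0; have := mxrank_unit (_ : mxsub f g A \in unitmx).
rewrite unitmxE unitfE => /(_ det_neq0) <-.
have -> : mxsub f g A = rowsub f (rowsub g A^T)^T by apply/matrixP => i j; rewrite !mxE.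
apply: leq_trans (mxrankS (rowsub_sub f _)) _.
by rewrite mxrank_tr -[leqRHS]mxrank_tr mxrankS // rowsub_sub.
Qed.

Lemma exists_rank_minor m n (A : 'M[F]_(m, n)) :
  exists (f : 'I_(\rank A) -> 'I_m) (g : 'I_(\rank A) -> 'I_n), \det (mxsub f g A) != 0.
Proof.
have fullAt : row_full (rowsub (maxrankfun A) A)^T.
  by rewrite /row_full mxrank_tr; apply: maxrowsub_free.
exists (maxrankfun A), (fullrankfun fullAt).
have := fullrowsub_unit fullAt; rewrite unitmxE unitfE -det_tr.
suff -> : (rowsub (fullrankfun fullAt) (rowsub (maxrankfun A) A)^T)^T =
  mxsub (maxrankfun A) (fullrankfun fullAt) A by [].
by apply/matrixP => i j; rewrite !mxE.
Qed.

Lemma submx_rankE p m n (z : 'M[F]_(p, n)) (A : 'M[F]_(m, n)) :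
  (z <= A)%MS = (\rank (col_mx A z) == \rank A).
Proof.
rewrite -(addsmxE A z) eq_sym (mxrank_leqif_sup (addsmxSl A z)).2.
by rewrite addsmx_sub submx_refl.
Qed.

Lemma mxrank_adds_row m n (A : 'M[F]_(m, n)) (v : 'rV[F]_n) :
  \rank (A + v)%MS = (\rank A + ~~ (v <= A)%MS)%N.
Proof.
have [vA|nvA] := boolP (v <= A)%MS.
  rewrite addn0; apply/eqP.
  by rewrite eq_sym (mxrank_leqif_sup (addsmxSl A v)).2 addsmx_sub submx_refl.
apply/anti_leq/andP; split.
  by apply: leq_trans (mxrank_adds_leqif A v) _; rewrite leq_add2l rank_leq_row.
rewrite addn1; apply: rank_ltmx; rewrite ltmxE addsmxSl /=.
by apply: contra nvA; apply: submx_trans (addsmxSr A v).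
Qed.

Lemma submx_conj_orthogonal m n (z : 'M[F]_(m, n)) (H B : 'M[F]_n) :
  H *m H^T = 1%:M -> (z <= H *m B *m H^T)%MS = (z *m H <= B)%MS.
Proof.
move=> oH; have [uH _] := mulmx1_unit oH.
rewrite -mulmxA (eqmxMfull _ (_ : row_full H)) ?row_full_unit //.
by rewrite -(submxMfree _ _ (_ : row_free H)) ?row_free_unit // -mulmxA (mulmx1C oH) mulmx1.
Qed.

End RankFacts.


Definition vdot (R : pzRingType) n (u w : 'rV[R]_n) := (u *m w^T) 0 0.

Section PsdMatrices.
Variables (R : rcfType) (n : nat).
Implicit Types (u v w z : 'rV[R]_n) (x y : 'M[R]_n).

Lemma vdotC u w : vdot u w = vdot w u.
Proof. by rewrite /vdot -[w *m u^T]trmxK trmx_mul trmxK [RHS]mxE. Qed.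

Lemma vdotDl u v w : vdot (u + v) w = vdot u w + vdot v w.
Proof. by rewrite /vdot mulmxDl mxE. Qed.

Lemma vdotZl a u w : vdot (a *: u) w = a * vdot u w.
Proof. by rewrite /vdot -scalemxAl mxE. Qed.

Lemma vdotNl u w : vdot (- u) w = - vdot u w.
Proof. by rewrite -scaleN1r vdotZl mulN1r. Qed.

Lemma vdotDr u v w : vdot w (u + v) = vdot w u + vdot w v.
Proof. by rewrite vdotC vdotDl !(vdotC w). Qed.

Lemma vdotZr a u w : vdot w (a *: u) = a * vdot w u.
Proof. by rewrite vdotC vdotZl vdotC. Qed.

Lemma vdotNr u w : vdot w (- u) = - vdot w u.
Proof. by rewrite vdotC vdotNl vdotC. Qed.

Lemma vdot_mulmxl m (A : 'M[R]_(m, n)) (u : 'rV[R]_m) w :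
  vdot (u *m A) w = vdot u (w *m A^T).
Proof. by rewrite /vdot trmx_mul trmxK mulmxA. Qed.

Lemma mulmx_vdot p u w (B : 'M[R]_(1, p)) : u *m w^T *m B = vdot u w *: B.
Proof. by rewrite [u *m w^T]mx11_scalar mul_scalar_mx. Qed.

Lemma vdot_ge0 u : 0 <= vdot u u.
Proof.
by rewrite /vdot mxE sumr_ge0 // => j _; rewrite mxE -expr2 sqr_ge0.
Qed.

Lemma vdot_eq0 u : (vdot u u == 0) = (u == 0).
Proof.
apply/idP/idP => [|/eqP->]; last by rewrite /vdot mul0mx mxE.
rewrite /vdot mxE psumr_eq0 => [/allP u0|j _]; last by rewrite mxE -expr2 sqr_ge0.
apply/eqP/rowP => j; have := u0 j (mem_index_enum j).
by rewrite mxE -expr2 sqrf_eq0 mxE => /eqP.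
Qed.

Lemma vdot_gt0 u : u != 0 -> 0 < vdot u u.
Proof. by move=> u0; rewrite lt_def vdot_eq0 u0 vdot_ge0. Qed.

Lemma vdot_submx m (A : 'M[R]_(m, n)) u w : (u <= A)%MS -> w *m A^T = 0 -> vdot u w = 0.
Proof.
move=> /submxP [D ->] wA0; rewrite /vdot -mulmxA.
by rewrite -[A *m w^T]trmxK trmx_mul trmxK wA0 linear0 mulmx0 mxE.
Qed.

Lemma vdot_mulmx_sym x u w : x^T = x -> vdot (u *m x) w = vdot (w *m x) u.
Proof. by move=> sx; rewrite vdot_mulmxl sx vdotC. Qed.

(* Row-vector form of [psd], matching the row-space conventions of mxalgebra. *)
Definition psdmx x := x^T = x /\ forall u, 0 <= vdot (u *m x) u.

Lemma psdmx_add x y : psdmx x -> psdmx y -> psdmx (x + y).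
Proof.
move=> [sx px] [sy py]; split; first by rewrite linearD /= sx sy.
by move=> u; rewrite mulmxDr vdotDl addr_ge0.
Qed.

Lemma psdmx_conj (M : 'M[R]_n) x : psdmx x -> psdmx (M^T *m x *m M).
Proof.
move=> [sx px]; split; first by rewrite !trmx_mul trmxK sx mulmxA.
by move=> u; rewrite !mulmxA vdot_mulmxl.
Qed.

Lemma psdmx_ker x u : psdmx x -> vdot (u *m x) u = 0 -> u *m x = 0.
Proof.
move=> [sx px] qu0; set z := u *m x; set a := vdot z z; set c := vdot (z *m x) z.
have c0 : 0 <= c by apply: px.
have quad t : vdot ((u + t *: z) *m x) (u + t *: z) = 2 * t * a + t ^+ 2 * c.
  rewrite mulmxDl -scalemxAl !(vdotDl, vdotDr, vdotZl, vdotZr) -/z qu0.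
  by rewrite (vdot_mulmx_sym z u sx) -/z -/a -/c; ring.
have : 0 <= (c + 1) ^+ 2 * (2 * (- a / (c + 1)) * a + (- a / (c + 1)) ^+ 2 * c).
  by rewrite mulr_ge0 ?sqr_ge0 // -quad.
have -> : (c + 1) ^+ 2 * (2 * (- a / (c + 1)) * a + (- a / (c + 1)) ^+ 2 * c) =
    - (a ^+ 2 * (c + 2)) by field; rewrite lt0r_neq0 // ltr_wpDl.
rewrite oppr_ge0 => a2c; have a2 : a ^+ 2 <= 0 by nra.
by apply/eqP; rewrite -vdot_eq0 -/a -sqrf_eq0 eq_le a2 sqr_ge0.
Qed.

Lemma psdmx_kerDl x y u : psdmx x -> psdmx y -> u *m (x + y) = 0 -> u *m x = 0.
Proof.
move=> hx [_ py] uxy0; have [_ px] := hx; apply: psdmx_ker hx _; apply/eqP.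
have : vdot (u *m x) u + vdot (u *m y) u == 0.
  by rewrite -vdotDl -mulmxDr uxy0 /vdot mul0mx mxE.
by rewrite paddr_eq0 ?px ?py // => /andP [].
Qed.

Lemma sym_submx m (A : 'M[R]_(m, n)) y : y^T = y ->
  (forall u, u *m y = 0 -> A *m u^T = 0) -> (A <= y)%MS.
Proof.
move=> sy kerA; rewrite submxE.
have cy0 : (cokermx y)^T *m y = 0.
  by have := congr1 trmx (mulmx_coker y); rewrite trmx_mul sy linear0.
have cA0 : (cokermx y)^T *m A^T = 0.
  apply/row_matrixP => i; rewrite row_mul row0 -[row i _]trmxK -trmx_mul kerA ?linear0 //.
  by rewrite -row_mul cy0 row0.
by rewrite -[_ *m _]trmxK trmx_mul cA0 linear0.
Qed.

Lemma psdmx_addE x y : psdmx x -> psdmx y -> ((x + y)%R :=: x + y)%MS.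
Proof.
move=> hx hy; have [sxy _] := psdmx_add hx hy.
have [sx _] := hx; have [sy _] := hy.
apply/eqmxP/andP; split; first exact: addmx_sub_adds.
rewrite addsmx_sub; apply/andP; split; apply: sym_submx => // u.
  by move/(psdmx_kerDl hx hy) => ux0; rewrite -[x]sx -trmx_mul ux0 linear0.
by rewrite addrC => /(psdmx_kerDl hy hx) uy0; rewrite -[y]sy -trmx_mul uy0 linear0.
Qed.

Lemma psdmx_conj_eqmx (M : 'M[R]_n) x : psdmx x -> (M^T *m x *m M :=: x *m M)%MS.
Proof.
move=> hx; have [sx _] := hx; have [sxM _] := psdmx_conj M hx.
apply/eqmxP/andP; split; first by rewrite -mulmxA submxMl.
apply: sym_submx => // u; rewrite !mulmxA => uxM0.
have : u *m M^T *m x = 0.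
  by apply: psdmx_ker => //; rewrite -vdot_mulmxl uxM0 /vdot mul0mx mxE.
by move=> uMx0; rewrite -mulmxA -[M]trmxK -trmx_mul -[x]sx -trmx_mul uMx0 trmx0.
Qed.

(* For w = 0 this is 1%:M, since 0^-1 = 0. *)
Definition orthoproj w : 'M[R]_n := 1%:M - (vdot w w)^-1 *: (w^T *m w).

Lemma trmx_orthoproj w : (orthoproj w)^T = orthoproj w.
Proof. by rewrite linearB /= trmx1 linearZ /= trmx_mul trmxK. Qed.

Lemma mulmx_orthoproj m (A : 'M[R]_(m, n)) w :
  A *m orthoproj w = A - (vdot w w)^-1 *: (A *m w^T *m w).
Proof. by rewrite mulmxBr mulmx1 -scalemxAr mulmxA. Qed.

Lemma orthoproj_ker w : w *m orthoproj w = 0.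
Proof.
have [->|w0] := eqVneq w 0; first by rewrite mul0mx.
by rewrite mulmx_orthoproj mulmx_vdot scalerA mulVf ?scale1r ?subrr ?vdot_eq0.
Qed.

Lemma orthoprojK w : orthoproj w *m orthoproj w = orthoproj w.
Proof.
rewrite {1}/orthoproj mulmxBl mul1mx -scalemxAl -mulmxA orthoproj_ker.
by rewrite mulmx0 scaler0 subr0.
Qed.

Definition reflector w : 'M[R]_n := orthoproj w *+ 2 - 1%:M.

Lemma trmx_reflector w : (reflector w)^T = reflector w.
Proof. by rewrite linearB /= linearMn /= trmx_orthoproj trmx1. Qed.

Lemma reflector_orthogonal w : reflector w *m (reflector w)^T = 1%:M.
Proof.
rewrite trmx_reflector /reflector mulmxE; have := orthoprojK w; rewrite mulmxE.
set P := orthoproj w => PP; rewrite mulrBl !mulrBr !mulr1 !mul1r mulrnAl mulrnAr PP.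
by rewrite mulr2n addrK opprB addrC subrK.
Qed.

Lemma reflector_conj_fix w x : x^T = x -> w *m x = 0 ->
  reflector w *m x *m (reflector w)^T = x.
Proof.
move=> sx wx0; have xw0 : x *m w^T = 0 by rewrite -sx -trmx_mul wx0 trmx0.
have xP : x *m orthoproj w = x by rewrite mulmx_orthoproj xw0 mul0mx scaler0 subr0.
have Px : orthoproj w *m x = x by rewrite -[LHS]trmxK trmx_mul sx trmx_orthoproj xP.
rewrite trmx_reflector /reflector mulr2n; set P := orthoproj w in xP Px *.
rewrite -mulmxA [x *m _]mulmxBr [x *m (P + P)]mulmxDr xP mulmx1 addrK.
by rewrite mulmxBl mulmxDl Px mul1mx addrK.
Qed.

Lemma reflector_swap u c : vdot u u = vdot c c -> u *m reflector (u - c) = c.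
Proof.
move=> uc; set w := u - c.
have [w0|w0] := eqVneq w 0.
  have -> : c = u by apply/esym/eqP; rewrite -subr_eq0 -/w w0.
  by rewrite w0 /reflector /orthoproj trmx0 mul0mx scaler0 subr0 mulr2n addrK mulmx1.
have wwE : vdot w w = 2 * vdot u w.
  by rewrite /w !(vdotDl, vdotDr, vdotNl, vdotNr) -uc (vdotC c u); ring.
have uw0 : vdot u w != 0.
  by apply: contra w0 => /eqP uw0; rewrite -vdot_eq0 wwE uw0 mulr0.
have uP : u *m orthoproj w = u - 2^-1 *: w.
  rewrite mulmx_orthoproj mulmx_vdot scalerA wwE invfM -mulrA mulVf //.
  by rewrite mulr1.
rewrite /reflector mulr2n mulmxBr mulmxDr uP mulmx1 /w.
by apply/rowP => j; rewrite !mxE; field.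
Qed.

Lemma kernel_reflect x v c : x^T = x -> v != 0 -> c != 0 -> v *m x = 0 -> c *m x = 0 ->
  exists H s, [/\ H *m H^T = 1%:M, H *m x *m H^T = x, s != 0 & v *m H = s *: c].
Proof.
move=> sx v0 c0 vx0 cx0; have cc0 := vdot_gt0 c0; have vv0 := vdot_gt0 v0.
pose s := Num.sqrt (vdot v v / vdot c c).
have s0 : 0 < s by rewrite sqrtr_gt0 divr_gt0.
have vs : vdot v v = vdot (s *: c) (s *: c).
  by rewrite vdotZl vdotZr mulrA -expr2 sqr_sqrtr ?divr_ge0 ?ltW // mulfVK ?gt_eqF.
exists (reflector (v - s *: c)), s; split.
- exact: reflector_orthogonal.
- by apply: reflector_conj_fix => //; rewrite mulmxBl vx0 -scalemxAl cx0 scaler0 subr0.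
- by rewrite gt_eqF.
- exact: reflector_swap.
Qed.

Lemma psdmx_split x : psdmx x -> x != 0 ->
  exists x1 v, [/\ psdmx x1, v != 0, v *m x1 = 0 & (x :=: x1 + v)%MS].
Proof.
move=> hx x0; have [i vi] := exists_row_neq0 x0; set v := row i x in vi *.
have vx : (v <= x)%MS := row_sub i x.
set P := orthoproj v; exists (P^T *m x *m P), v; split => //.
- exact: psdmx_conj.
- by rewrite trmx_orthoproj !mulmxA orthoproj_ker !mul0mx.
have xPE : x *m P = x - (vdot v v)^-1 *: (x *m v^T *m v) := mulmx_orthoproj x v.
have vvx : (x *m v^T *m v <= v)%MS := submxMl _ _.
apply/eqmxP; rewrite (adds_eqmx (psdmx_conj_eqmx P hx) (eqmx_refl v)); apply/andP; split.
  rewrite -[X in (X <= _)%MS](subrK ((vdot v v)^-1 *: (x *m v^T *m v))) -xPE.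
  exact: addmx_sub_adds (submx_refl _) (scalemx_sub _ vvx).
rewrite addsmx_sub vx andbT (psdmx_conj_eqmx P hx) xPE addmx_sub ?submx_refl // eqmx_opp.
exact: scalemx_sub (submx_trans vvx vx).
Qed.

Lemma mxrank_psdmx_split x x1 v : psdmx x1 -> v != 0 -> v *m x1 = 0 ->
  (x :=: x1 + v)%MS -> \rank x = (\rank x1).+1.
Proof.
move=> [sx1 _] v0 vx1 ->; rewrite mxrank_adds_row.
suff -> : ~~ (v <= x1)%MS by rewrite addn1.
by apply: contra v0 => vx1'; rewrite -vdot_eq0 (vdot_submx vx1') // sx1 vx1.
Qed.

Lemma mxrank_psdmx_add_split x x1 v y : psdmx x -> psdmx x1 -> psdmx y ->
  (x :=: x1 + v)%MS ->
  \rank (x + y)%R = (\rank (x1 + y)%R + ~~ (v <= (x1 + y)%R)%MS)%N.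
Proof.
move=> hx hx1 hy xE; rewrite (psdmx_addE hx hy) (adds_eqmx xE (eqmx_refl y)).
by rewrite -addsmxA (addsmxC v) addsmxA mxrank_adds_row !(psdmx_addE hx1 hy).
Qed.

Lemma psdmx_add_ker x y : psdmx x -> psdmx y -> (\rank (x + y)%R < n)%N ->
  exists z, [/\ z != 0, z *m x = 0 & z *m (x + y) = 0].
Proof.
move=> hx hy rxy; have : kermx (x + y) != 0.
  by rewrite -mxrank_eq0 mxrank_ker subn_eq0 -ltnNge.
move=> /exists_row_neq0 [i zi]; exists (row i (kermx (x + y))).
have zxy0 : row i (kermx (x + y)) *m (x + y) = 0 by rewrite -row_mul mulmx_ker row0.
by split => //; apply: psdmx_kerDl hx hy zxy0.
Qed.
End PsdMatrices.

Lemma psdmxE {R : realType} {d} {x : 'M[R]_d} : psd x <-> psdmx x.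
Proof.
split=> -[sx px]; split=> // u; first by have := px u^T; rewrite trmxK.
by have := px u^T; rewrite /vdot trmxK.
Qed.

Definition moment_row (R : pzRingType) k (t : R) : 'rV[R]_k := \row_(i < k) t ^+ i.

Lemma moment_row_neq0 (R : nzRingType) k (t : R) : (0 < k)%N -> moment_row k t != 0.
Proof.
case: k => // k _; apply/eqP => /rowP /(_ ord0) /eqP.
by rewrite !mxE expr0 oner_eq0.
Qed.

Lemma count_moment_ortho (R : rcfType) k (u : 'rV[R]_k) (ts : seq R) : u != 0 -> uniq ts ->
  (count (fun t => vdot (moment_row k t) u == 0%R) ts < k)%N.
Proof.
move=> u0 uts; pose p := rVpoly u.
have p0 : p != 0 by apply: contra u0 => /eqP p0; rewrite -[u]rVpolyK -/p p0 linear0.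
have pE t : p.[t] = vdot (moment_row k t) u.
  rewrite horner_poly /vdot mxE; apply: eq_bigr => i _.
  by rewrite valK !mxE mulrC.
rewrite -size_filter; apply: leq_trans (size_poly _ _).
apply: max_poly_roots p0 _ (filter_uniq _ uts).
by apply/allP => t; rewrite mem_filter /root pE => /andP [].
Qed.

Lemma count_curve_ortho (R : rcfType) k n (B : 'M[R]_(k, n)) (z : 'rV[R]_n) (ts : seq R) :
  z != 0 -> (z <= B)%MS -> uniq ts ->
  (count (fun t => vdot (moment_row k t *m B) z == 0%R) ts < k)%N.
Proof.
move=> z0 zB uts; under eq_count do rewrite vdot_mulmxl.
apply: count_moment_ortho uts; apply: contra z0 => /eqP zB0.
by rewrite -vdot_eq0 (vdot_submx zB zB0).
Qed.


Section MeasurableRank.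
Variables (R : realType) (dT : measure_display) (T : measurableType dT).

Definition mx_measurable m n (F : T -> 'M[R]_(m, n)) :=
  forall i j, measurable_fun setT (fun x => F x i j).

Lemma mx_measurable_cst m n (C : 'M[R]_(m, n)) : mx_measurable (fun=> C).
Proof. by move=> i j; exact: measurable_cst. Qed.

Lemma mx_measurable_add m n (F G : T -> 'M[R]_(m, n)) :
  mx_measurable F -> mx_measurable G -> mx_measurable (fun x => F x + G x).
Proof.
by move=> mF mG i j; under eq_fun do rewrite mxE; exact: measurable_funD.
Qed.

Lemma mx_measurable_col_mx m1 m2 n (F : T -> 'M[R]_(m1, n)) (G : T -> 'M[R]_(m2, n)) :
  mx_measurable F -> mx_measurable G -> mx_measurable (fun x => col_mx (F x) (G x)).
Proof.
move=> mF mG i j; case: (split_ordP i) => k ->.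
  by under eq_fun do rewrite col_mxEu; exact: mF.
by under eq_fun do rewrite col_mxEd; exact: mG.
Qed.

Lemma measurable_fun_det n (F : T -> 'M[R]_n) :
  mx_measurable F -> measurable_fun setT (fun x => \det (F x)).
Proof.
move=> mF; apply: measurable_sum => s.
apply: measurable_funM; first exact: measurable_cst.
by apply: measurable_prod => i _; apply: mF.
Qed.

Lemma measurable_rank_geq m n k (F : T -> 'M[R]_(m, n)) :
  mx_measurable F -> measurable [set x | (k <= \rank (F x))%N].
Proof.
move=> mF; have -> : [set x | (k <= \rank (F x))%N] =
    \bigcup_(k' : 'I_m.+1) \bigcup_(f : {ffun 'I_k' -> 'I_m})
      \bigcup_(g : {ffun 'I_k' -> 'I_n})
      [set x | (k <= k')%N && (\det (mxsub f g (F x)) != 0)].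
  apply/seteqP; split => [x /= kF|x [k' _ [f _ [g _ /= /andP [kk' /rank_geq_minor]]]]].
    have [f [g fg0]] := exists_rank_minor (F x).
    have rF : (\rank (F x) < m.+1)%N by rewrite ltnS rank_leq_row.
    exists (Ordinal rF) => //; exists (finfun f) => //; exists (finfun g) => //=.
    by rewrite kF mxsub_ffun.
  exact: leq_trans.
apply: countable_bigcupT_measurable => [|k']; first exact: countableP.
apply: countable_bigcupT_measurable => [|f]; first exact: countableP.
apply: countable_bigcupT_measurable => [|g]; first exact: countableP.
case: leqP => _ /=; last by rewrite (_ : [set _ | false] = set0) //; apply/seteqP; split.
have mdet : measurable_fun setT (fun x => \det (mxsub f g (F x))).
  by apply: measurable_fun_det => i j; under eq_fun do rewrite mxE; exact: mF.
rewrite -[X in measurable X]setTI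
  (_ : [set _ | _] = (fun x => \det (mxsub f g (F x))) @^-1` (~` [set 0])).
  exact: mdet measurableT _ (measurableC (measurable_set1 _)).
by apply/seteqP; split => x /= /eqP.
Qed.

Lemma measurable_rank_eq m n k (F : T -> 'M[R]_(m, n)) :
  mx_measurable F -> measurable [set x | \rank (F x) = k].
Proof.
move=> mF; rewrite (_ : [set _ | _] =
  [set x | (k <= \rank (F x))%N] `\` [set x | (k.+1 <= \rank (F x))%N]).
  by apply: measurableD; apply: measurable_rank_geq.
apply/seteqP; split => x /= => [->|[kF /negP]]; first by rewrite leqnn ltnn.
by rewrite -ltnNge ltnS => Fk; apply/eqP; rewrite eqn_leq Fk.
Qed.

Lemma measurable_rank_eqr m1 m2 n (F : T -> 'M[R]_(m1, n)) (G : T -> 'M[R]_(m2, n)) :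
  mx_measurable F -> mx_measurable G -> measurable [set x | \rank (F x) = \rank (G x)].
Proof.
move=> mF mG; rewrite (_ : [set _ | _] =
  \bigcup_(k : 'I_m1.+1) ([set x | \rank (F x) = k] `&` [set x | \rank (G x) = k])).
  apply: countable_bigcupT_measurable => [|k]; first exact: countableP.
  by apply: measurableI; apply: measurable_rank_eq.
apply/seteqP; split => [x /= FG|x [k _ [/= -> ->]] //].
have rF : (\rank (F x) < m1.+1)%N by rewrite ltnS rank_leq_row.
by exists (Ordinal rF).
Qed.

Lemma measurable_submx p m n (Z : T -> 'M[R]_(p, n)) (F : T -> 'M[R]_(m, n)) :
  mx_measurable Z -> mx_measurable F -> measurable [set x | (Z x <= F x)%MS].
Proof.
move=> mZ mF; rewrite (_ : [set _ | _] = [set x | \rank (col_mx (F x) (Z x)) = \rank (F x)]).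
  by apply: measurable_rank_eqr => //; apply: mx_measurable_col_mx.
by apply/seteqP; split => x /=; rewrite submx_rankE => /eqP.
Qed.
End MeasurableRank.

Lemma mx_measurable_id (R : realType) d : mx_measurable (fun M : MxMeas R d => M : 'M[R]_d).
Proof. by move=> i j _ B mB; rewrite setTI; apply: sub_sigma_algebra; exists i, j, B. Qed.

Section CountingBound.
Variables (R : realType) (dT : measure_display) (T : measurableType dT) (P : probability T R).
Local Open Scope ereal_scope.

Lemma sum_prob_le_count I (s : seq I) (A : I -> set T) (M : nat) :
  (forall i, measurable (A i)) -> (forall w, (count (fun i => w \in A i) s <= M)%N) ->
  \sum_(i <- s) P (A i) <= M%:R%:E.
Proof.
move=> mA countM.
have mind i : measurable_fun setT (EFin \o (\1_(A i) : T -> R)).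
  by apply/measurable_EFinP; exact: measurable_indic.
have sum_indic w : \sum_(i <- s) (\1_(A i) w : R)%:E = (count (fun i => w \in A i) s)%:R%:E.
  elim: s {countM} => [|i s IHs]; first by rewrite big_nil.
  by rewrite big_cons IHs indicE /= natrD EFinD.
under eq_bigr do rewrite -(setIT (A _)) -integral_indic //.
rewrite -ge0_integral_sum //.
apply: le_trans (_ : \int[P]_(w in setT) (cst (M%:R%:E : \bar R)) w <= _).
  apply: ge0_le_integral => //; last by move=> w _; rewrite sum_indic lee_fin ler_nat.
    by move=> w _; rewrite sum_indic lee_fin ler0n.
  exact: emeasurable_sum.
have PT : (P : measure T R) [set: T] = 1 := probability_setT P.
by rewrite integral_cst // PT mule1.
Qed.

Lemma sum_prob_le_count_ae I (s : seq I) (A : I -> set T) (M : nat) :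
  (forall i, measurable (A i)) -> {ae P, forall w, (count (fun i => w \in A i) s <= M)%N} ->
  \sum_(i <- s) P (A i) <= M%:R%:E.
Proof.
move=> mA [N [mN PN0 badN]].
have PAN i : P (A i) = P (A i `\` N).
  rewrite (measureDI P (mA i) mN) (@subset_measure0 _ _ _ P (A i `&` N) N) ?adde0 //.
  exact: measurableI.
under eq_bigr do rewrite PAN.
apply: (sum_prob_le_count (A := fun i => A i `\` N)) => [i|w]; first exact: measurableD.
have [Nw|nNw] := pselect (N w).
  rewrite (@eq_count _ _ pred0) ?count_pred0 // => i.
  by apply/negbTE/negP => /set_mem [].
apply: leq_trans (_ : count (fun i => w \in A i) s <= M)%N.
  by apply: sub_count => i /set_mem [Aw _]; apply/mem_set.
by apply: contrapT => notM; apply: nNw; exact: badN.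
Qed.
End CountingBound.


Lemma bounded_multiples_eq0 (F : archiRealFieldType) (r M : F) :
  0 <= r -> (forall N : nat, N%:R * r <= M) -> r = 0.
Proof.
move=> r0 bound; apply/eqP; rewrite eq_le r0 andbT leNgt; apply/negP => rpos.
have M0 : 0 <= M by apply: le_trans (bound 0%N); rewrite mul0r.
have := archi_boundP (divr_ge0 M0 r0); rewrite ltr_pdivrMr // => /lt_le_trans.
by move=> /(_ _ (bound _)); rewrite ltxx.
Qed.

Section InvariantRank.
Variables (R : realType) (dT : measure_display) (T : measurableType dT) (P : probability T R).
Variables (d b : nat) (Y : {RV P >-> MxMeas R d}).
Local Notation Ym w := (Y w : 'M[R]_d).
Hypothesis psdY : forall w, psdmx (Ym w).
Hypothesis rankY : forall w, \rank (Ym w) = b.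
Hypothesis Y_invariant : forall u : 'M[R]_d, orthogonal_mx u ->
  forall A : set (MxMeas R d), measurable A ->
    P ((fun w => u *m Ym w *m u^T) @^-1` A) = P (Y @^-1` A).

Lemma mx_measurable_RV : mx_measurable (fun w => Ym w).
Proof. by move=> i j; apply: measurableT_comp (mx_measurable_id i j) (measurable_funPT Y). Qed.

Definition hit (x : 'M[R]_d) (z : 'rV[R]_d) : set T := [set w | (z <= (x + Ym w)%R)%MS].

Lemma measurable_hit x z : measurable (hit x z).
Proof.
apply: measurable_submx; first exact: mx_measurable_cst.
exact: mx_measurable_add (mx_measurable_cst _) mx_measurable_RV.
Qed.

Lemma hitZ x z s : s != 0 -> hit x (s *: z) = hit x z.
Proof. by move=> s0; apply/seteqP; split => w; rewrite /hit /= eqmx_scale. Qed.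

Lemma prob_hit_conj x z (H : 'M[R]_d) : orthogonal_mx H -> H *m x *m H^T = x ->
  P (hit x z) = P (hit x (z *m H)).
Proof.
move=> oH Hx; pose A := [set M : MxMeas R d | (z <= (x + (M : 'M[R]_d))%R)%MS].
have mA : measurable A.
  apply: measurable_submx; first exact: mx_measurable_cst.
  exact: mx_measurable_add (mx_measurable_cst _) (@mx_measurable_id R d).
rewrite -[LHS]/(P (Y @^-1` A)) -(Y_invariant oH mA); congr (P _).
have conjE w : (z <= (x + H *m Ym w *m H^T)%R)%MS = (z *m H <= (x + Ym w)%R)%MS.
  by rewrite -{1}Hx -mulmxDl -mulmxDr submx_conj_orthogonal.
by apply/seteqP; split => w; rewrite /A /hit /= conjE.
Qed.

Lemma prob_hit_kernel x v c : x^T = x -> v != 0 -> c != 0 -> v *m x = 0 -> c *m x = 0 ->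
  P (hit x v) = P (hit x c).
Proof.
move=> sx v0 c0 vx cx; have [H [s [oH Hx s0 vH]]] := kernel_reflect sx v0 c0 vx cx.
by rewrite (prob_hit_conj v oH Hx) vH hitZ.
Qed.

Lemma count_hit_kernel_curve x ts w : psdmx x -> uniq ts -> (\rank (x + Ym w)%R < d)%N ->
  (count (fun t => w \in hit x (moment_row _ t *m row_base (kermx x))) ts
    < \rank (kermx x))%N.
Proof.
move=> hx uts rxY; have [z [z0 zx zxY]] := psdmx_add_ker hx (psdY w) rxY.
have zK : (z <= row_base (kermx x))%MS by rewrite eq_row_base sub_kermx zx.
apply: leq_ltn_trans (count_curve_ortho z0 zK uts); apply: sub_count => t /set_mem hitw.
apply/eqP; apply: vdot_submx hitw _.
by have [sxY _] := psdmx_add hx (psdY w); rewrite sxY.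
Qed.

Lemma prob_hit_eq0 x v : psdmx x -> v != 0 -> v *m x = 0 ->
  {ae P, forall w, (\rank (x + Ym w)%R < d)%N} -> P (hit x v) = 0%E.
Proof.
move=> hx v0 vx rank_lt; set k := \rank (kermx x).
pose c t := moment_row k t *m row_base (kermx x).
have k0 : (0 < k)%N.
  rewrite lt0n mxrank_eq0; apply: contraNneq v0 => K0.
  have : (v <= kermx x)%MS by rewrite sub_kermx vx.
  by rewrite K0 submx0.
have c0 t : c t != 0 by rewrite mulmx_free_eq0 ?row_base_free ?moment_row_neq0.
have cx t : c t *m x = 0.
  by apply/eqP; rewrite -sub_kermx (submx_trans (submxMl _ _)) ?eq_row_base.
have Pc t : P (hit x (c t)) = P (hit x v).
  exact/esym/(prob_hit_kernel (proj1 hx) v0 (c0 t) vx (cx t)).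
have Pfin : P (hit x v) = (fine (P (hit x v)))%:E.
  rewrite fineK // ge0_fin_numE ?measure_ge0 //; apply: le_lt_trans (ltry 1).
  exact: probability_le1 (measurable_hit _ _).
have bound N : N%:R * fine (P (hit x v)) <= k%:R.
  pose ts := [seq i%:R | i <- index_iota 0 N] : seq R.
  have uts : uniq ts.
    by rewrite map_inj_uniq ?iota_uniq // => i j /eqP; rewrite eqr_nat => /eqP.
  have count_ae : {ae P, forall w, (count (fun t => w \in hit x (c t)) ts <= k)%N}.
    by apply: filterS rank_lt => w /(count_hit_kernel_curve hx uts)/ltnW.
  have := sum_prob_le_count_ae (fun t => measurable_hit x (c t)) count_ae.
  under eq_bigr do rewrite Pc Pfin.
  by rewrite sumEFin big_map sumr_const_nat subn0 lee_fin mulr_natl.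
by rewrite Pfin (bounded_multiples_eq0 _ bound) // -lee_fin -Pfin measure_ge0.
Qed.

Lemma ae_not_hit x v : psdmx x -> v != 0 -> v *m x = 0 ->
  {ae P, forall w, (\rank (x + Ym w)%R < d)%N} -> {ae P, forall w, ~ hit x v w}.
Proof.
move=> hx v0 vx rank_lt; exists (hit x v); split; first exact: measurable_hit.
  exact: prob_hit_eq0.
by move=> w /= /contrapT.
Qed.

Lemma ae_rank_psdmx_add a x : psdmx x -> \rank x = a ->
  {ae P, forall w, \rank (x + Ym w)%R = minn (a + b) d}.
Proof.
elim: a x => [|a IHa] x hx rx.
  apply: aeW => w; move/eqP: rx; rewrite mxrank_eq0 => /eqP ->.
  by rewrite add0r rankY add0n; apply/esym/minn_idPl; rewrite -(rankY w) rank_leq_row.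
have x0 : x != 0 by rewrite -mxrank_eq0 rx.
have [x1 [v [hx1 v0 vx1 xE]]] := psdmx_split hx x0.
have rx1 : \rank x1 = a by apply/eq_add_S; rewrite -rx (mxrank_psdmx_split hx1 v0 vx1 xE).
have rankE w := mxrank_psdmx_add_split hx hx1 (psdY w) xE.
have IH1 := IHa x1 hx1 rx1; rewrite addSn.
have [dab|abd] := leqP d (a + b).
  apply: filterS IH1 => w r1; rewrite (minn_idPr dab) in r1.
  have := rank_leq_row (x + Ym w)%R; rewrite rankE r1 (minn_idPr (leqW dab)).
  by rewrite -[leqRHS]addn0 leq_add2l leqn0 => /eqP ->; rewrite addn0.
have rank_lt : {ae P, forall w, (\rank (x1 + Ym w)%R < d)%N}.
  by apply: filterS IH1 => w ->; rewrite (minn_idPl (ltnW abd)).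
apply: filterS2 IH1 (ae_not_hit hx1 v0 vx1 rank_lt) => w r1 nhit.
rewrite rankE r1 (minn_idPl (ltnW abd)) (minn_idPl abd).
by have /negP -> : ~ (v <= (x1 + Ym w)%R)%MS := nhit; rewrite addn1.
Qed.
End InvariantRank.

Theorem lemma5p2 (R : realType) (dT : measure_display) (T : measurableType dT)
  (P : probability T R) (d b : nat) (Y : {RV P >-> MxMeas R d})
  (HY : forall w, S_rank d b (Y w))
  (Hinv : forall u : 'M[R]_d, orthogonal_mx u ->
     forall A : set (MxMeas R d), measurable A ->
       P ((fun w => u *m (Y w : 'M[R]_d) *m u^T) @^-1` A) = P (Y @^-1` A)) :
  (forall (a : nat) (x0 : 'M[R]_d), S_rank d a x0 ->
     ((a + b <= d)%N -> {ae P, forall w, S_rank d (a + b) (x0 + Y w)}) /\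
     ((d <= a + b)%N -> {ae P, forall w, S_rank d d (x0 + Y w)})) /\
  (forall (a c : nat) (x0 : 'M[R]_d), S_rank d c x0 -> (a + b < d)%N ->
     {ae P, forall w, S_rank d (a + b) (x0 + Y w)} -> c = a).
Proof.
have psdY w : psdmx (Y w : 'M[R]_d) by apply/psdmxE; have [] := HY w.
have rankY w : \rank (Y w : 'M[R]_d) = b by have [] := HY w.
have rank_ae := ae_rank_psdmx_add psdY rankY Hinv.
have S_rank_add x0 r w : psd x0 -> \rank (x0 + Y w)%R = r -> S_rank d r (x0 + Y w).
  by move=> /psdmxE hx0 rxY; split=> //; apply/psdmxE/psdmx_add.
split=> [a x0 [hx rx] | a c x0 [hx rx] abd ae_ab].
  have rank_x0 := rank_ae _ _ (psdmxE.1 hx) rx.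
  split=> abd; apply: filterS rank_x0 => w;
    [rewrite (minn_idPl abd) | rewrite (minn_idPr abd)]; exact: S_rank_add.
have PF : ProperFilter (almost_everywhere P).
  have PT : (P : measure T R) [set: T] = 1%E := probability_setT P.
  by apply: ae_properfilter_algebraOfSetsType; rewrite PT lte01.
have [w [[_ r_ab] r_cb]] := filter_ex (filterS2 _ (fun w h1 h2 => conj h1 h2) ae_ab
  (rank_ae _ _ (psdmxE.1 hx) rx)).
rewrite r_ab in r_cb; have cbd : (c + b <= d)%N.
  by rewrite leqNgt; apply: contraTN abd => /ltnW/minn_idPr; rewrite -r_cb => ->; rewrite ltnn.
by move: r_cb; rewrite (minn_idPl cbd) => /addIn.
Qed.
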